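(* Let $X=\{0,1,2,3\}$, $s_1=(0\,3\,2)$, $s_2=(0\,1\,3)$, $s_3=s_2^{-1}=(0\,3\,1)$, $A=\langle s_1,s_2,s_3\rangle\cong\mathrm{Alt}(4)$, and let $b\in\mathrm{St}(1)$ be the automorphism of $X^*$ with $b|_0=b$, $b|_1=s_1$, $b|_2=s_2$, $b|_3=s_3$; let $B=\langle b\rangle$ (of order $3$) and $G=\langle A\cup B\rangle$. Then for each $b'\in\{b,b^2\}$ the map $\lambda_{b'}:A\to A$ is eventually trivial (for every $a\in A$ some iterate $\lambda_{b'}^n(a)$ equals $1_A$), but the element $g=s_3s_1bs_3b$ has infinite order; in particular $G$ is not periodic.
   Context: $X^*$ is the free monoid on $X$ viewed as a rooted tree; $\mathrm{Aut}(X^* )$ acts on the right ($gh$ = first $g$ then $h$, so permutations compose left to right); sections $g|_u$ are defined by $(u\star v).g=u.g\star v.(g|_u)$; permutations of $X$ act as rooted automorphisms $(x\star v).\rho=x.\rho\star v$; $\mathrm{St}(1)$ is the first layer stabiliser. For $a\in A$ let $\ell_a(0)$ be the length of the $\langle a\rangle$-orbit of $0$, and for $b'\in B$ let $\lambda_{b'}(a)=b'|_{0.a}\,b'|_{0.a^2}\cdots b'|_{0.a^{\ell_a(0)-1}}$. *)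

From mathcomp Require Import all_boot all_order all_fingroup.
Set Implicit Arguments. Unset Strict Implicit. Unset Printing Implicit Defensive.
Import GroupScope.

Notation X := 'I_4.
Definition x0 : X := inord 0.
Definition x1 : X := inord 1.
Definition x2 : X := inord 2.
Definition x3 : X := inord 3.

(* Maps on X^* (tree automorphisms are represented as functions on words). *)
Definition tmap := seq X -> seq X.

(* Right-action product: (comp_r g h) = "first g then h" = g h. *)
Definition comp_r (g h : tmap) : tmap := fun w => h (g w).

(* Section g|_u : (u ++ v).g = u.g ++ v.(g|_u). *)
Definition section (g : tmap) (u : seq X) : tmap :=
  fun v => drop (size u) (g (u ++ v)).

(* Rooted automorphism of a permutation: (x v).rho = (x.rho) v.
   mathcomp's perm product is left to right: (p * q) x = q (p x). *)
Definition rooted (r : {perm X}) : tmap :=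
  fun w => if w is x :: v then r x :: v else [::].

Definition letter_map (g : tmap) : X -> X := fun x => head x (g [:: x]).

Definition s1f (i : X) : X :=
  inord (match val i with 0 => 3 | 3 => 2 | 2 => 0 | k => k end).
Definition s2f (i : X) : X :=
  inord (match val i with 0 => 1 | 1 => 3 | 3 => 0 | k => k end).

Lemma s1f_inj : injective s1f.
Proof.
move=> [[|[|[|[|i]]]] Hi] [[|[|[|[|j]]]] Hj] //;
  rewrite /s1f /= => /(congr1 val); rewrite /= !inordK //; try by apply: val_inj.
all: by move=> _; apply: val_inj.
Qed.
Lemma s2f_inj : injective s2f.
Proof.
move=> [[|[|[|[|i]]]] Hi] [[|[|[|[|j]]]] Hj] //;
  rewrite /s2f /= => /(congr1 val); rewrite /= !inordK //; try by apply: val_inj.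
all: by move=> _; apply: val_inj.
Qed.

Definition s1 : {perm X} := perm s1f_inj.
Definition s2 : {perm X} := perm s2f_inj.
Definition s3 : {perm X} := s2^-1.

Definition A : {set {perm X}} := <<[set s1; s2; s3]>>.

Definition sel (x : X) : {perm X} :=
  if x == x1 then s1 else if x == x2 then s2 else s3.

Fixpoint bmap (w : seq X) : seq X :=
  match w with
  | [::] => [::]
  | x :: v => x :: (if x == x0 then bmap v else rooted (sel x) v)
  end.

(* lambda_{b'}(a) = b'|_{0.a} b'|_{0.a^2} ... b'|_{0.a^{l-1}},
   l = length of the <a>-orbit of 0. *)
Definition lambda (b' : tmap) (a : tmap) : tmap :=
  let f := letter_map a in
  let l := fingraph.order f x0 in
  foldl (fun acc i => comp_r acc (section b' [:: iter i f x0])) id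
        (iota 1 l.-1).

Definition gmap : tmap :=
  comp_r (comp_r (comp_r (comp_r (rooted s3) (rooted s1)) bmap) (rooted s3)) bmap.

(* Sections of b^k at a letter y <> 0 are rooted permutations, and the <a>-orbit
   of 0 only returns to 0 at its end, so lambda_{b^k} maps the rooted automorphism
   of a permutation a to another one: it acts on Sym(X), and a finite computation
   shows that six iterations send every permutation to 1.
   The element g permutes the first level as the 3-cycle (0 2 3); g^3 fixes the
   letter 2 and its section there is conjugate to g by b.  Hence g^m <> 1 implies
   g^(3m) <> 1, while g^(3m+1) and g^(3m+2) move the letter 0; by induction no
   positive power of g is trivial. *)

From mathcomp Require Import all_boot all_order all_fingroup.
From Stdlib Require Import FunctionalExtensionality.
Set Implicit Arguments. Unset Strict Implicit. Unset Printing Implicit Defensive.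

(* [inord], [perm] and the enumeration of 'I_4 do not reduce (they go through
   the opaque [idP] and locked definitions), so the letters c0..c3, the tables
   s1c..s3c, [order_c0] and [letters] below are computable copies of the objects
   of the statement, used by [simpl] and [vm_compute]. *)
Definition c0 : X := @Ordinal 4 0 isT.
Definition c1 : X := @Ordinal 4 1 isT.
Definition c2 : X := @Ordinal 4 2 isT.
Definition c3 : X := @Ordinal 4 3 isT.

Lemma x0E : x0 = c0. Proof. by apply: val_inj; rewrite /= inordK. Qed.
Lemma x1E : x1 = c1. Proof. by apply: val_inj; rewrite /= inordK. Qed.
Lemma x2E : x2 = c2. Proof. by apply: val_inj; rewrite /= inordK. Qed.

Lemma ord4_ind (P : X -> Prop) : P c0 -> P c1 -> P c2 -> P c3 -> forall x, P x.
Proof.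
move=> P0 P1 P2 P3 [[|[|[|[|i]]]] lti] //.
- by rewrite (_ : Ordinal lti = c0) //; apply: val_inj.
- by rewrite (_ : Ordinal lti = c1) //; apply: val_inj.
- by rewrite (_ : Ordinal lti = c2) //; apply: val_inj.
- by rewrite (_ : Ordinal lti = c3) //; apply: val_inj.
Qed.

Definition s1c (x : X) : X := match val x with 0 => c3 | 1 => c1 | 2 => c0 | _ => c2 end.
Definition s2c (x : X) : X := match val x with 0 => c1 | 1 => c3 | 2 => c2 | _ => c0 end.
Definition s3c (x : X) : X := match val x with 0 => c3 | 1 => c0 | 2 => c2 | _ => c1 end.

Lemma s1E : s1 =1 s1c.
Proof. by move=> x; rewrite permE; elim/ord4_ind: x; apply: val_inj; rewrite /s1f /= inordK. Qed.
Lemma s2E : s2 =1 s2c.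
Proof. by move=> x; rewrite permE; elim/ord4_ind: x; apply: val_inj; rewrite /s2f /= inordK. Qed.
Lemma s3E : s3 =1 s3c.
Proof.
move=> x; have s2s3c : s2 (s3c x) = x by rewrite s2E; elim/ord4_ind: x.
by rewrite -{1}s2s3c /s3 permK.
Qed.

Definition selc (y : X) : X -> X :=
  if y == c1 then s1c else if y == c2 then s2c else s3c.

Lemma selE y : sel y =1 selc y.
Proof.
rewrite /sel /selc x1E x2E; case: ifP => _; first exact: s1E.
by case: ifP => _; [exact: s2E | exact: s3E].
Qed.

Definition rootedf (f : X -> X) : tmap :=
  fun w => if w is x :: v then f x :: v else [::].

Lemma rootedf_id : rootedf id = id.
Proof. by apply: functional_extensionality; case. Qed.

Lemma comp_rootedf f g : comp_r (rootedf f) (rootedf g) = rootedf (g \o f).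
Proof. by apply: functional_extensionality; case. Qed.

Lemma bmap_cons x v :
  bmap (x :: v) = x :: (if x == c0 then bmap v else rootedf (selc x) v).
Proof. by rewrite /= x0E; case: (x == c0); case: v => //= y v; rewrite selE. Qed.

Lemma iter_bmap_cons k y v : y != c0 ->
  iter k bmap (y :: v) = y :: rootedf (iter k (selc y)) v.
Proof.
move=> /negbTE y_neq0; elim: k => [|k IHk]; first by case: v.
by rewrite iterS IHk bmap_cons y_neq0; case: v {IHk}.
Qed.

Lemma section_iter_bmap k y : y != c0 ->
  section (iter k bmap) [:: y] = rootedf (iter k (selc y)).
Proof.
move=> y_neq0; apply: functional_extensionality => v.
by rewrite /section /= iter_bmap_cons //= drop0.
Qed.

Lemma iter_bmap_c0 k v : iter k bmap (c0 :: v) = c0 :: iter k bmap v.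
Proof. by elim: k => // k IHk; rewrite !iterS IHk bmap_cons eqxx. Qed.

Lemma iter3_bmap w : iter 3 bmap w = w.
Proof.
elim: w => // x v IHv; have [->|x_neq0] := eqVneq x c0.
  by rewrite iter_bmap_c0 IHv.
rewrite iter_bmap_cons //; case: v {IHv} => // y v /=.
by elim/ord4_ind: x {x_neq0}; elim/ord4_ind: y.
Qed.

Lemma iter_neq_orbit_start (T : finType) (f : T -> T) x i :
  0 < i < fingraph.order f x -> iter i f x != x.
Proof.
case/andP=> i_gt0 lt_i_ord; apply/eqP => fix_x.
by move: (findex_iter lt_i_ord); rewrite fix_x findex0 => i0; rewrite -i0 in i_gt0.
Qed.

Definition order_c0 (f : X -> X) : nat :=
  if iter 1 f c0 == c0 then 1 else if iter 2 f c0 == c0 then 2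
  else if iter 3 f c0 == c0 then 3 else 4.

Lemma order_c0E f : injective f -> fingraph.order f c0 = order_c0 f.
Proof.
move=> f_inj; have ord_le4 : fingraph.order f c0 <= 4.
  exact: leq_trans (max_card _) (eq_leq (card_ord 4)).
have := iter_order f_inj c0; have := @iter_neq_orbit_start _ f c0.
rewrite /order_c0; move: ord_le4 (fingraph.order_gt0 f c0).
case: (fingraph.order f c0) => [|[|[|[|[|o]]]]] // _ _ neq iter_ord.
- by rewrite iter_ord eqxx.
- by rewrite (negbTE (neq 1 isT)) iter_ord eqxx.
- by rewrite (negbTE (neq 1 isT)) (negbTE (neq 2 isT)) iter_ord eqxx.
- by rewrite (negbTE (neq 1 isT)) (negbTE (neq 2 isT)) (negbTE (neq 3 isT)).
Qed.

Definition lambda_fun (t : X -> X -> X) (f : X -> X) : X -> X :=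
  foldl (fun acc i => t (iter i f c0) \o acc) id (iota 1 (order_c0 f).-1).

Section RootedLambda.

Variables (b' : tmap) (t : X -> X -> X).
Hypothesis section_b' : forall y, y != c0 -> section b' [:: y] = rootedf (t y).
Hypothesis t_inj : forall y, injective (t y).

Lemma foldl_section (f g : X -> X) s : (forall i, i \in s -> iter i f c0 != c0) ->
  foldl (fun acc i => comp_r acc (section b' [:: iter i f c0])) (rootedf g) s
  = rootedf (foldl (fun acc i => t (iter i f c0) \o acc) g s).
Proof.
elim: s g => //= i s IHs g orbit_s.
rewrite section_b' ?orbit_s ?mem_head // comp_rootedf IHs // => j s_j.
by rewrite orbit_s // inE s_j orbT.
Qed.

Lemma lambda_rootedf f : injective f -> lambda b' (rootedf f) = rootedf (lambda_fun t f).
Proof.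
move=> f_inj; rewrite /lambda -[letter_map _]/f x0E -rootedf_id foldl_section.
  by rewrite order_c0E.
move=> i; rewrite mem_iota add1n prednK ?fingraph.order_gt0 //.
exact: iter_neq_orbit_start.
Qed.

Lemma lambda_fun_inj f : injective (lambda_fun t f).
Proof.
rewrite /lambda_fun; elim: (iota _ _) (@id X) (@inj_id X) => //= i s IHs g g_inj.
by apply: IHs; apply: inj_comp.
Qed.

Lemma iter_lambda_rootedf n f : injective f ->
  iter n (lambda b') (rootedf f) = rootedf (iter n (lambda_fun t) f).
Proof.
move=> f_inj; elim: n => // n IHn; rewrite !iterS IHn lambda_rootedf //.
by case: n {IHn} => [|n] //; apply: lambda_fun_inj.
Qed.

End RootedLambda.

Definition letters : seq X := [:: c0; c1; c2; c3].

Lemma mem_letters x : x \in letters.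
Proof. by elim/ord4_ind: x. Qed.

Definition tab (s : seq X) (x : X) : X := nth c0 s x.

Lemma tab_map f : tab [seq f y | y <- letters] = f.
Proof. by apply: functional_extensionality; elim/ord4_ind. Qed.

Lemma perm_map_letters (a : {perm X}) :
  [seq a x | x <- letters] \in permutations letters.
Proof.
rewrite mem_permutations uniq_perm ?(map_inj_uniq (@perm_inj _ a)) // => x.
by rewrite -{1}(permKV a x) map_f mem_letters.
Qed.

Lemma iter_selc_inj k y : injective (iter k (selc y)).
Proof. by elim: k => // k IHk u v /=; rewrite -!selE => /perm_inj /IHk. Qed.

Lemma lambda_fun_iter_selc_vanishes k : k \in [:: 1; 2] ->
  all (fun s => all (fun x =>
         iter 6 (lambda_fun (fun y => iter k (selc y))) (tab s) x == x) letters)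
    (permutations letters).
Proof. by rewrite !inE => /orP[] /eqP ->; vm_compute. Qed.

Lemma lambda_iter_bmap_vanishes k (a : {perm X}) w : k \in [:: 1; 2] ->
  iter 6 (lambda (iter k bmap)) (rooted a) w = w.
Proof.
move=> k12; rewrite -[rooted a]/(rootedf a).
rewrite (iter_lambda_rootedf (t := fun y => iter k (selc y))); first last.
- exact: perm_inj.
- exact: iter_selc_inj.
- exact: section_iter_bmap.
have /allP /(_ _ (perm_map_letters a)) /allP vanish := lambda_fun_iter_selc_vanishes k12.
case: w => // x v; rewrite /rootedf -{1}(tab_map a).
by congr (_ :: _); apply/eqP/vanish/mem_letters.
Qed.

Local Ltac gmap_letter := rewrite /gmap /comp_r /= /sel x0E x1E x2E !s3E /= s1E /=.

Lemma gmap_c0 v : gmap (c0 :: v) = c2 :: rooted s3 v.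
Proof.
gmap_letter; congr (_ :: _).
by case: v => // y v /=; rewrite !s2E s3E; elim/ord4_ind: y.
Qed.

Lemma gmap_c2 v : gmap (c2 :: v) = c3 :: rooted s3 (bmap v).
Proof. by gmap_letter. Qed.

Lemma gmap_c3 v : gmap (c3 :: v) = c0 :: bmap (rooted s1 v).
Proof. by gmap_letter. Qed.

Definition gmap_section_c2 : tmap :=
  comp_r (comp_r (comp_r (comp_r bmap (rooted s3)) (rooted s1)) bmap) (rooted s3).

Lemma iter3_gmap_c2 v : iter 3 gmap (c2 :: v) = c2 :: gmap_section_c2 v.
Proof. by rewrite /= gmap_c2 gmap_c3 gmap_c0. Qed.

Lemma bmap_conj_gmap v : bmap (gmap_section_c2 v) = gmap (bmap v).
Proof. by []. Qed.

Lemma iter_gmap_c2 m v :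
  iter (3 * m) gmap (c2 :: v) = c2 :: iter m gmap_section_c2 v.
Proof. by elim: m => // m IHm; rewrite mulnS iterD IHm iter3_gmap_c2. Qed.

Lemma iter_bmap_conj_gmap m v :
  bmap (iter m gmap_section_c2 v) = iter m gmap (bmap v).
Proof. by elim: m => // m IHm; rewrite !iterS bmap_conj_gmap IHm. Qed.

Lemma iter_gmap_c0 m : iter (3 * m) gmap [:: c0] = [:: c0].
Proof. by elim: m => // m IHm; rewrite mulnS iterD IHm /= gmap_c0 gmap_c2 gmap_c3. Qed.

Lemma gmap_aperiodic n : 0 < n -> exists w, iter n gmap w <> w.
Proof.
elim/ltn_ind: n => n IHn n_gt0.
have [m [r [n_eq r_lt3]]] : exists m r, n = 3 * m + r /\ r < 3.
  by exists (n %/ 3), (n %% 3); rewrite mulnC -divn_eq ltn_mod.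
rewrite {n}n_eq in IHn n_gt0 *; case: r r_lt3 n_gt0 IHn => [|[|[|//]]] _.
- rewrite addn0 muln_gt0 /= => m_gt0 IHm.
  have [w gm_w] := IHm m (ltn_Pmull (isT : 1 < 3) m_gt0) m_gt0.
  have bmap_w : bmap (iter 2 bmap w) = w := iter3_bmap w.
  exists (c2 :: iter 2 bmap w); rewrite iter_gmap_c2 => -[fix_v].
  by apply: gm_w; rewrite -bmap_w -iter_bmap_conj_gmap fix_v.
- by exists [:: c0]; rewrite addn1 iterS iter_gmap_c0 gmap_c0 => -[].
- by exists [:: c0]; rewrite addn2 !iterS iter_gmap_c0 gmap_c0 gmap_c2 => -[].
Qed.

Theorem mainTheorem13 :
  (forall b' : tmap, b' = bmap \/ b' = comp_r bmap bmap ->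
     forall a : {perm X}, a \in A ->
       exists n : nat, forall w : seq X, iter n (lambda b') (rooted a) w = w)
  /\
  (forall n : nat, 0 < n -> exists w : seq X, iter n gmap w <> w).
Proof.
split; last exact: gmap_aperiodic.
(* lambda_{b'} vanishes on all of Sym(X). *)
move=> b' b'E a _; exists 6 => w.
have [k k12 ->] : exists2 k, k \in [:: 1; 2] & b' = iter k bmap.
  by case: b'E => ->; [exists 1 | exists 2].
exact: lambda_iter_bmap_vanishes.
Qed.
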